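(* Let $p$ be an odd prime. Any transversal of $B_p$ other than the main diagonal $\{(i,i,2i): i\in\mathbb{Z}_p\}$ contains at least $\log_2(p)+1$ triples $(r,c,s)$ with $r\neq c$. Equivalently, any transversal of $B_p$ meets the main diagonal in either $p$ cells or at most $p-\log_2(p)-1$ cells.
   Context: $B_p$ is the Latin square of order $p$ viewed as the set of triples $\{(i,j,i+j \bmod p): i,j\in\mathbb{Z}_p\}$ (row, column, symbol). A transversal of a Latin square of order $p$ is a set of $p$ of its triples that contains each row, each column and each symbol exactly once. The main diagonal consists of the cells $(i,i)$. *)

From mathcomp Require Import all_boot.
From Stdlib Require Import Reals.
Set Implicit Arguments. Unset Strict Implicit. Unset Printing Implicit Defensive.

Definition triple (p : nat) := ('I_p * 'I_p * 'I_p)%type.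

Definition trow {p} (t : triple p) : 'I_p := t.1.1.
Definition tcol {p} (t : triple p) : 'I_p := t.1.2.
Definition tsym {p} (t : triple p) : 'I_p := t.2.

Definition Bp (p : nat) : {set triple p} :=
  [set t | (tsym t : nat) == ((trow t + tcol t) %% p)%N].

Definition latin_transversal (p : nat) (L T : {set triple p}) : Prop :=
  [/\ T \subset L, #|T| = p,
      forall r : 'I_p, #|[set t in T | trow t == r]| = 1,
      forall c : 'I_p, #|[set t in T | tcol t == c]| = 1 &
      forall s : 'I_p, #|[set t in T | tsym t == s]| = 1].

Definition main_diag (p : nat) : {set triple p} :=
  [set t in Bp p | trow t == tcol t].

Definition off_diag (p : nat) (T : {set triple p}) : {set triple p} :=
  [set t in T | trow t != tcol t].
Arguments latin_transversal p L T : clear implicits.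
Arguments off_diag p T : clear implicits.

(* Let c(i) be the column of the cell of the transversal in row i, and V the set
   of rows with c(i) <> i, so that |V| is the number of off-diagonal triples.
   As p is odd, the symbol 2j of a row j in V is carried by a row a(j) in V,
   and b(j) := c(a(j)) lies in V, differs from a(j) and satisfies
   a(j) + b(j) = 2j (mod p).  Pick r in a terminal strong component of the
   digraph j -> a(j), b(j), and let W be the vertices reachable from r, r
   excluded.  Then y(j) = j - r is a nonzero function on W, vanishing at r,
   with 2 y(j) = y(a(j)) + y(b(j)) in F_p, so p divides the determinant of the
   Laplacian of the digraph reduced at r.  By the matrix-tree expansion this
   determinant counts the arborescences of W rooted at r, and there are between
   1 and 2^|W| of them since every vertex has two out-arcs.  Hence
   p <= 2^|W| <= 2^(|V| - 1). *)

From mathcomp Require Import all_boot.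
From Stdlib Require Import Reals Lra.
From mathcomp Require perm all_algebra.

(* [Reals] rebinds [^] on [nat] to [Nat.pow]; this restores ssrnat's notations. *)
Import ssrnat.

Set Implicit Arguments. Unset Strict Implicit. Unset Printing Implicit Defensive.

Lemma connect_terminal (T : finType) (e : rel T) (x : T) :
  exists2 r, connect e x r & forall j, connect e r j -> connect e j r.
Proof.
have [r xr r_min] := arg_minnP (fun r => #|[set j | connect e r j]|) (connect0 e x).
exists r => // j rj.
have sub : [set k | connect e j k] \subset [set k | connect e r k].
  by apply/subsetP => k; rewrite !inE; apply: connect_trans.
have /eqP eq_reach : [set k | connect e j k] == [set k | connect e r k].
  by rewrite eqEcard sub r_min //; apply: connect_trans rj.
have : r \in [set k | connect e r k] by rewrite inE connect0.
by rewrite -eq_reach inE.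
Qed.

Lemma connect_rank (T : finType) (e : rel T) (r : T) :
  exists d : T -> nat, forall j, connect e j r -> j != r ->
    exists2 k, e j k & d k < d j.
Proof.
pose P j n := [exists s : n.-tuple T, path e j s && (last j s == r)].
(* [d j] is the length of a shortest path from [j] to [r]. *)
have /fin_all_exists [d d_min] : forall j, exists n,
    connect e j r -> P j n /\ forall m, P j m -> n <= m.
  move=> j; have [/connectP [s js sr] | _] := boolP (connect e j r); last by exists 0.
  have [|n Pn n_min] := ex_minnP (ex_intro (P j) (size s) _).
    by apply/existsP; exists (in_tuple s); rewrite js -sr eqxx.
  by exists n.
exists d => j /d_min [/existsP [t /andP [jt /eqP tr]] _] jr.
move: jt tr (size_tuple t); case: (tval t) => [_ /= jr'|k s /andP [jk ks] /= ksr <-].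
  by rewrite jr' eqxx in jr.
have [_ d_k] := d_min k (introT connectP (ex_intro2 _ _ s ks (esym ksr))).
exists k => //; rewrite ltnS d_k //; apply/existsP; exists (in_tuple s).
by apply/andP; split; [exact: ks | apply/eqP].
Qed.

Lemma eqn_mod_mul2l p i j : odd p -> (2 * i == 2 * j %[mod p]) = (i == j %[mod p]).
Proof.
move=> p_odd; wlog le_ji : i j / j <= i.
  move=> H; case: (leqP j i) => [/H // | /ltnW /H].
  by rewrite eq_sym => ->; rewrite eq_sym.
by rewrite !eqn_mod_dvd ?leq_mul2l ?le_ji ?orbT // -mulnBr Gauss_dvdr // coprimen2.
Qed.

Section MatrixTree.

(* Imported only locally: all_algebra rebinds the [%R] delimiter, which the
   statement of corollary6p2 uses for the real numbers. *)
Import perm all_algebra GRing.Theory.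
Local Open Scope ring_scope.

Lemma det_rowD_ffun (R : comPzRingType) n (F : 'I_n -> bool -> 'I_n -> R) :
  \det (\matrix_(i, j) (F i false j + F i true j)) =
  \sum_(pi : {ffun 'I_n -> bool}) \det (\matrix_(i, j) F i (pi i) j).
Proof.
transitivity (\sum_(s : 'S_n) \sum_(pi : {ffun 'I_n -> bool})
     (-1) ^+ s * \prod_i F i (pi i) (s i)).
  apply: eq_bigr => s _; rewrite -mulr_sumr; congr (_ * _).
  rewrite -(bigA_distr_bigA (fun i t => F i t (s i))).
  by apply: eq_bigr => i _; rewrite mxE big_bool /= addrC.
rewrite exchange_big; apply: eq_bigr => pi _; apply: eq_bigr => s _.
by congr (_ * _); apply: eq_bigr => i _; rewrite mxE.
Qed.

Lemma det_mulmx_eq0 (R : idomainType) n (A : 'M[R]_n) (v : 'cV_n) :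
  v != 0 -> A *m v = 0 -> \det A = 0.
Proof.
move=> v_nz Av0; rewrite -det_tr; apply/eqP/det0P; exists v^T.
  by rewrite trmx_eq0.
by rewrite -trmx_mul Av0 trmx0.
Qed.

Definition pfun_mx (R : pzRingType) n (f : 'I_n -> option 'I_n) : 'M[R]_n :=
  \matrix_(i, j) ((i == j)%:R - (f i == Some j)%:R).

Definition pfun_del n (m : 'I_n.+1) (f : 'I_n.+1 -> option 'I_n.+1) (i : 'I_n) :=
  obind (unlift m) (f (lift m i)).

Lemma pfun_mx_del (R : pzRingType) n (f : 'I_n.+1 -> option 'I_n.+1) m :
  row' m (col' m (pfun_mx R f)) = pfun_mx R (pfun_del m f).
Proof.
apply/matrixP => i j; rewrite !mxE /pfun_del (inj_eq lift_inj).
case: (f (lift m i)) => [k|] //=; congr (_ - _%:R).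
case: unliftP => [k' ->|->] /=; first by rewrite !(inj_eq Some_inj) (inj_eq lift_inj).
by rewrite (inj_eq Some_inj) (negbTE (neq_lift m j)).
Qed.

Lemma det_pfun_mx_del (R : comPzRingType) n (f : 'I_n.+1 -> option 'I_n.+1) m :
  f m = None -> \det (pfun_mx R f) = \det (pfun_mx R (pfun_del m f)).
Proof.
move=> fm; rewrite (expand_det_row _ m) (bigD1 m) //= big1 ?addr0.
  by rewrite mxE eqxx fm subr0 mul1r /cofactor pfun_mx_del addnn -signr_odd odd_double mul1r.
by move=> j /negbTE mj; rewrite mxE eq_sym mj fm subrr mul0r.
Qed.

Lemma sum_pfun_row (R : pzRingType) n (i : 'I_n) (s : option 'I_n) (y : 'I_n -> R) :
  \sum_j ((i == j)%:R - (s == Some j)%:R) * y j = y i - oapp y 0 s.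
Proof.
under eq_bigr do rewrite mulrBl.
rewrite sumrB (bigD1 i) //= eqxx mul1r big1 ?addr0 => [|j /negbTE]; last first.
  by rewrite eq_sym => ->; rewrite mul0r.
case: s => [k|] /=; last by rewrite big1 ?subr0 // => j _; rewrite mul0r.
rewrite (bigD1 k) //= eqxx mul1r big1 ?addr0 // => j /negbTE kj.
by rewrite (inj_eq Some_inj) eq_sym kj mul0r.
Qed.

Lemma det_pfun_mx_total (R : idomainType) n (f : 'I_n.+1 -> option 'I_n.+1) :
  (forall i, f i != None) -> \det (pfun_mx R f) = 0.
Proof.
move=> f_tot; apply: (@det_mulmx_eq0 _ _ _ (const_mx 1)).
  by apply/eqP => /colP/(_ ord0); rewrite !mxE; apply/eqP/oner_neq0.
apply/colP => i; rewrite !mxE.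
under eq_bigr do rewrite !mxE.
rewrite sum_pfun_row.
by case: (f i) (f_tot i) => [k|] //= _; rewrite subrr.
Qed.

Lemma det_pfun_mx01 (R : idomainType) n (f : 'I_n -> option 'I_n) :
  \det (pfun_mx R f) = 0 \/ \det (pfun_mx R f) = 1.
Proof.
elim: n f => [|n IHn] f; first by rewrite det_mx00; right.
case: (pickP [pred i | f i == None]) => [m /eqP fm | f_tot].
  by rewrite (det_pfun_mx_del _ fm); apply: IHn.
by left; apply: det_pfun_mx_total => i; exact: negbT (f_tot i).
Qed.

Lemma det_pfun_mx_ranked (R : comPzRingType) n (f : 'I_n -> option 'I_n) (d : 'I_n -> nat) :
  (forall i j, f i = Some j -> (d j < d i)%N) -> \det (pfun_mx R f) = 1.
Proof.
elim: n f d => [|n IHn] f d f_dec; first by rewrite det_mx00.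
have [m _ m_min] := arg_minnP d (isT : predT ord0).
have fm : f m = None.
  by case E: (f m) => [k|] //; have := f_dec _ _ E; rewrite ltnNge m_min.
rewrite (det_pfun_mx_del _ fm); apply: (IHn _ (d \o lift m)) => i j /=.
rewrite /pfun_del; case E: (f (lift m i)) => [k|] //=.
by case: unliftP => // k' kE [<-]; apply: f_dec; rewrite E kE.
Qed.

Section ReducedLaplacian.

Variables (R : idomainType) (n : nat) (W : {set 'I_n}) (a b : 'I_n -> 'I_n).

(* Row [i] of [reduced_laplacian] is [2 e_i - e_(a i) - e_(b i)] for [i] in [W],
   with the arcs leaving [W] dropped, and [e_i] outside [W].  [lap_entry i t] is
   the half of row [i] along [arc i t]; for [t = true] it is zero outside [W]. *)

Definition arc (i : 'I_n) (t : bool) : 'I_n := if t then a i else b i.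

Definition inner_arc i t : option 'I_n :=
  if (i \in W) && (arc i t \in W) then Some (arc i t) else None.

Definition lap_entry i t j : R :=
  if t && (i \notin W) then 0 else (i == j)%:R - (inner_arc i t == Some j)%:R.

Definition reduced_laplacian : 'M[R]_n :=
  \matrix_(i, j) (lap_entry i false j + lap_entry i true j).

Definition choice_mx (pi : {ffun 'I_n -> bool}) : 'M[R]_n :=
  \matrix_(i, j) lap_entry i (pi i) j.

Definition unit_choices := [set pi | \det (choice_mx pi) == 1].

Lemma choice_mxE (pi : {ffun 'I_n -> bool}) : false.-support pi \subset W ->
  choice_mx pi = pfun_mx R (fun i => inner_arc i (pi i)).
Proof.
move=> /subsetP piW; apply/matrixP => i j; rewrite !mxE /lap_entry.
by case: (boolP (pi i)) => pi_i //=; rewrite piW // inE pi_i.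
Qed.

Lemma det_choice_mx_unsupported (pi : {ffun 'I_n -> bool}) :
  ~~ (false.-support pi \subset W) -> \det (choice_mx pi) = 0.
Proof.
case/subsetPn => i pi_i iW; rewrite (expand_det_row _ i) big1 // => j _.
by move: pi_i; rewrite mxE /lap_entry inE iW; case: (pi i) => // _; rewrite mul0r.
Qed.

Lemma det_choice_mx01 (pi : {ffun 'I_n -> bool}) :
  \det (choice_mx pi) = 0 \/ \det (choice_mx pi) = 1.
Proof.
have [/choice_mxE -> | /det_choice_mx_unsupported] := boolP (false.-support pi \subset W).
  exact: det_pfun_mx01.
by left.
Qed.

Lemma det_reduced_laplacian : \det reduced_laplacian = #|unit_choices|%:R.
Proof.
rewrite det_rowD_ffun -sum1_card natr_sum [RHS]big_mkcond /=.
apply: eq_bigr => pi _; rewrite inE -/(choice_mx pi).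
by case: (det_choice_mx01 pi) => ->; rewrite ?eqxx // eq_sym oner_eq0.
Qed.

Lemma unit_choices_supported pi : pi \in unit_choices -> false.-support pi \subset W.
Proof.
rewrite inE; apply: contraTT => /det_choice_mx_unsupported ->.
by rewrite eq_sym oner_eq0.
Qed.

Lemma card_unit_choices : (#|unit_choices| <= 2 ^ #|W|)%N.
Proof.
rewrite -card_bool -(card_pffun_on false W predT); apply/subset_leq_card/subsetP => pi pi1.
by apply/pffun_onP; split; [exact: unit_choices_supported | move=> ? _].
Qed.

Lemma unit_choices_gt0 (d : 'I_n -> nat) :
  {in W, forall i, (d (a i) < d i) || (d (b i) < d i)}%N -> (0 < #|unit_choices|)%N.
Proof.
move=> d_dec; pose pi0 := [ffun i => (i \in W) && (d (a i) < d i)%N].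
apply/card_gt0P; exists pi0; rewrite inE choice_mxE; last first.
  by apply/subsetP => i; rewrite !inE ffunE; case: (i \in W).
apply/eqP; apply: (@det_pfun_mx_ranked _ _ _ d) => i j; rewrite /inner_arc /arc ffunE.
case: ifP => // /andP[iW _] [<-]; rewrite iW /=.
by case: ifP => // /negbT; have := d_dec i iW; case: ltnP.
Qed.

Lemma reduced_laplacian_harmonic (y : 'I_n -> R) :
  (forall j, j \notin W -> y j = 0) ->
  {in W, forall i, y (a i) + y (b i) = y i *+ 2} ->
  reduced_laplacian *m \col_j y j = 0.
Proof.
move=> y_out y_mid; apply/colP => i; rewrite !mxE.
under eq_bigr do rewrite !mxE mulrDl.
rewrite big_split /= /lap_entry /= sum_pfun_row.
have [iW | /[dup] iW /y_out ->] := boolP (i \in W); last first.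
  rewrite big1 => [|j _]; last by rewrite mul0r.
  by rewrite /inner_arc (negbTE iW) /= subrr addr0.
have arcE t : oapp y 0 (inner_arc i t) = y (arc i t).
  by rewrite /inner_arc iW /=; case: ifP => //= /negbT /y_out ->.
by rewrite /= sum_pfun_row !arcE /arc addrACA -opprD [y (b i) + _]addrC y_mid // mulr2n subrr.
Qed.

End ReducedLaplacian.

Lemma harmonic_fun_nat_eq0 (R : idomainType) n (W : {set 'I_n}) (a b : 'I_n -> 'I_n)
    (d : 'I_n -> nat) (y : 'I_n -> R) :
  {in W, forall i, (d (a i) < d i) || (d (b i) < d i)}%N ->
  (forall j, j \notin W -> y j = 0) ->
  {in W, forall i, y (a i) + y (b i) = y i *+ 2} ->
  (exists j, y j != 0) ->
  exists2 N, (0 < N <= 2 ^ #|W|)%N & N%:R = 0 :> R.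
Proof.
move=> d_dec y_out y_mid [j yj]; exists #|unit_choices R W a b|.
  by rewrite (unit_choices_gt0 R d_dec) card_unit_choices.
rewrite -det_reduced_laplacian.
apply: det_mulmx_eq0 (reduced_laplacian_harmonic y_out y_mid).
by apply/eqP => /colP/(_ j); rewrite !mxE; apply/eqP.
Qed.

Lemma Fp_nat_ord_eq p (i j : 'I_p) : prime p ->
  ((i : nat)%:R == (j : nat)%:R :> 'F_p) = (i == j).
Proof.
by move=> p_pr; rewrite -(inj_eq val_inj) /= !val_Fp_nat // !modn_small.
Qed.

Lemma midpoint_root_bound p (W : {set 'I_p}) (r : 'I_p) (a b : 'I_p -> 'I_p)
    (d : 'I_p -> nat) :
  prime p -> r \notin W -> W != set0 ->
  {in W, forall j, (a j \in r |: W) && (b j \in r |: W)} ->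
  {in W, forall j, (d (a j) < d j) || (d (b j) < d j)}%N ->
  {in W, forall j, a j + b j = 2 * j %[mod p]}%N ->
  (p <= 2 ^ #|W|)%N.
Proof.
move=> p_pr rW /set0Pn [j0 j0W] abW d_dec ab_mid.
pose y j : 'F_p := if j \in W then (j : nat)%:R - (r : nat)%:R else 0.
have yE j : j \in r |: W -> y j = (j : nat)%:R - (r : nat)%:R.
  by rewrite /y in_setU1 => /orP [/eqP -> | ->]; rewrite ?(negbTE rW) ?subrr.
have y_out j : j \notin W -> y j = 0 by rewrite /y => /negbTE ->.
have y_mid : {in W, forall j, y (a j) + y (b j) = y j *+ 2}.
  move=> j jW; have /andP [ajW bjW] := abW j jW.
  have mid : (a j : nat)%:R + (b j : nat)%:R = (j : nat)%:R *+ 2 :> 'F_p.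
    by rewrite -natrD -(Fp_nat_mod p_pr) ab_mid // Fp_nat_mod // natrM mulr_natl.
  rewrite (yE _ ajW) (yE _ bjW) (yE _ (setU1r r jW)).
  by rewrite addrACA mid -opprD -mulr2n mulrnBl.
have y_nz : exists j, y j != 0.
  exists j0; rewrite (yE _ (setU1r r j0W)) subr_eq0 Fp_nat_ord_eq //.
  by apply: contraNneq rW => <-.
have [N /andP [N_gt0 N_le] N0] := harmonic_fun_nat_eq0 d_dec y_out y_mid y_nz.
apply: leq_trans N_le; apply: dvdn_leq => //.
by rewrite (dvdn_pcharf (pchar_Fp p_pr)) N0.
Qed.

End MatrixTree.

Lemma midpoint_maps_bound p (V : {set 'I_p}) (a b : 'I_p -> 'I_p) :
  prime p -> V != set0 ->
  {in V, forall j, a j \in V} -> {in V, forall j, b j \in V} ->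
  {in V, forall j, a j != b j} ->
  {in V, forall j, a j + b j = 2 * j %[mod p]} ->
  2 * p <= 2 ^ #|V|.
Proof.
move=> p_pr /set0Pn [x xV] aV bV ab_neq ab_mid.
pose e : rel 'I_p := fun j k => (j \in V) && ((k == a j) || (k == b j)).
have e_closed : closed e V.
  by move=> j k /andP [jV /orP [] /eqP ->]; rewrite jV ?aV ?bV.
have [r xr r_term] := connect_terminal e x.
pose F := [set j | connect e r j].
have FV j : j \in F -> j \in V.
  by rewrite inE => /(closed_connect e_closed); rewrite -(closed_connect e_closed xr) => <-.
have F_arc j : j \in F -> (a j \in F) && (b j \in F).
  move=> jF; rewrite !inE; have jV := FV j jF; rewrite inE in jF.
  by rewrite !(connect_trans jF) // connect1 // /e jV eqxx ?orbT.
have rF : r \in F by rewrite inE connect0.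
have W_arc : {in F :\ r, forall j, (a j \in r |: F :\ r) && (b j \in r |: F :\ r)}.
  by move=> j /setD1P [_ jF]; rewrite setD1K // F_arc.
have W_nz : F :\ r != set0.
  have /andP [arF brF] := F_arc r rF; apply/set0Pn.
  case: (eqVneq (a r) r) => [ar | ar]; last by exists (a r); rewrite in_setD1 ar.
  exists (b r); rewrite in_setD1 brF andbT.
  by apply: contra_neq (ab_neq r (FV r rF)) => ->.
have [d d_dec] := connect_rank e r.
have W_dec : {in F :\ r, forall j, (d (a j) < d j) || (d (b j) < d j)}.
  move=> j /[!inE] /andP [jr jF].
  have [k /andP [_ jk] dk] := d_dec j (r_term j jF) jr.
  by case/orP: jk => /eqP kE; rewrite -kE dk ?orbT.
have p_le := midpoint_root_bound p_pr (negbT (setD11 r F)) W_nz W_arc W_dec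
  (fun j jW => ab_mid j (FV j (setD1P jW).2)).
have W_lt_V : #|F :\ r| < #|V|.
  have /subset_leq_card : F \subset V by apply/subsetP.
  by rewrite (cardsD1 r F) rF.
apply: leq_trans (leq_pexp2l (isT : 0 < 2) W_lt_V).
by rewrite expnS leq_mul2l.
Qed.

Lemma Bp_cell_inj p (t u : triple p) : t \in Bp p -> u \in Bp p ->
  trow t = trow u -> tcol t = tcol u -> t = u.
Proof.
case: t u => [[r c] s] [[r' c'] s']; rewrite !inE /trow /tcol /tsym /=.
move=> /eqP s_rc /eqP s'_rc' rr' cc'; subst r' c'.
by congr (_, _); apply: val_inj; rewrite /= s_rc s'_rc'.
Qed.

Lemma card_fiber1_inj (X : finType) (Y : eqType) (A : {set X}) (f : X -> Y) (k : Y) :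
  #|[set x in A | f x == k]| = 1 -> {in A &, forall x y, f x = k -> f y = k -> x = y}.
Proof.
move=> /eqP; rewrite eqn_leq => /andP [/card_le1_eqP fiber_eq _] x y xA yA xk yk.
by apply: fiber_eq; rewrite inE ?xA ?yA ?xk ?yk eqxx.
Qed.

Lemma card_fiber1_exists (X : finType) (Y : eqType) (A : {set X}) (f : X -> Y) (k : Y) :
  #|[set x in A | f x == k]| = 1 -> exists2 x, x \in A & f x = k.
Proof.
move=> f1; have /card_gt0P [x] : 0 < #|[set x in A | f x == k]| by rewrite f1.
by rewrite inE => /andP [xA /eqP xk]; exists x.
Qed.

Section BpTransversal.

Variables (p : nat) (T : {set triple p}).
Hypothesis T_tr : latin_transversal p (Bp p) T.

Let T_Bp : T \subset Bp p. Proof. by case: T_tr. Qed.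
Let row1 r : #|[set t in T | trow t == r]| = 1. Proof. by case: T_tr. Qed.
Let col1 c : #|[set t in T | tcol t == c]| = 1. Proof. by case: T_tr. Qed.
Let sym1 s : #|[set t in T | tsym t == s]| = 1. Proof. by case: T_tr. Qed.

Definition row_triple (i : 'I_p) : triple p := odflt (i, i, i) [pick t in T | trow t == i].

Lemma row_tripleP i : row_triple i \in T /\ trow (row_triple i) = i.
Proof.
rewrite /row_triple; case: pickP => [t /andP [tT /eqP] // | none].
by have [t tT ti] := card_fiber1_exists (row1 i); have := none t; rewrite /= tT ti eqxx.
Qed.

Lemma row_triple_trow t : t \in T -> row_triple (trow t) = t.
Proof.
move=> tT; have [uT ut] := row_tripleP (trow t).
exact: card_fiber1_inj (row1 (trow t)) _ _ uT tT ut erefl.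
Qed.

Definition col (i : 'I_p) : 'I_p := tcol (row_triple i).

Lemma col_inj : injective col.
Proof.
move=> i j cij; have [iT ri] := row_tripleP i; have [jT rj] := row_tripleP j.
by rewrite -ri -rj (card_fiber1_inj (col1 (col j)) iT jT cij).
Qed.

Lemma tsym_row_triple i : tsym (row_triple i) = (i + col i) %% p :> nat.
Proof.
have [/(subsetP T_Bp)] := row_tripleP i; rewrite inE => /eqP -> ->.
by [].
Qed.

Lemma sym_row_triple (s : 'I_p) : exists i, tsym (row_triple i) = s.
Proof.
have [t tT ts] := card_fiber1_exists (sym1 s).
by exists (trow t); rewrite row_triple_trow.
Qed.

Definition moved := [set i | col i != i].

Lemma off_diagE : off_diag p T = row_triple @: moved.
Proof.
apply/setP => t; rewrite inE; apply/andP/imsetP => [[tT rc] | [i]].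
  by exists (trow t); rewrite ?row_triple_trow // inE /col row_triple_trow // eq_sym.
rewrite inE => ci ->; have [iT ri] := row_tripleP i.
by rewrite iT ri eq_sym.
Qed.

Lemma card_off_diag : #|off_diag p T| = #|moved|.
Proof.
rewrite off_diagE card_imset // => i j /(congr1 trow).
by rewrite (proj2 (row_tripleP i)) (proj2 (row_tripleP j)).
Qed.

Lemma moved_eq0 : moved = set0 -> T = main_diag p.
Proof.
move=> moved0; apply/setP => t; apply/idP/idP => [tT | /setIdP [tB /eqP rc]].
  have : trow t \notin moved by rewrite moved0 inE.
  rewrite inE negbK /col row_triple_trow // => /eqP ct.
  by rewrite inE (subsetP T_Bp) // ct eqxx.
have [uT ru] := row_tripleP (trow t).
have : trow t \notin moved by rewrite moved0 inE.
rewrite inE negbK => /eqP cu.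
have -> // : t = row_triple (trow t).
by apply: Bp_cell_inj tB (subsetP T_Bp _ uT) (esym ru) _; rewrite -/(col _) cu rc.
Qed.

Lemma col_moved i : i \in moved -> col i \in moved.
Proof. by rewrite !inE; apply: contra => /eqP /col_inj ->. Qed.

Lemma moved_midpoint j : odd p -> j \in moved ->
  exists2 i, i \in moved & (i + col i = 2 * j %[mod p]).
Proof.
move=> p_odd jm.
have [i si] := sym_row_triple (Ordinal (ltn_pmod (2 * j) (odd_gt0 p_odd))).
have mid : (i + col i = 2 * j %[mod p]) by rewrite -tsym_row_triple si /=.
exists i => //; rewrite inE; apply/eqP => ci.
have ij : i = j.
  apply: val_inj; move/eqP: mid; rewrite ci addnn -mul2n eqn_mod_mul2l //.
  by rewrite !modn_small // => /eqP.
by move: jm; rewrite inE -ij ci eqxx.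
Qed.

End BpTransversal.

Lemma off_diag_card_bound p (T : {set triple p}) :
  prime p -> odd p -> latin_transversal p (Bp p) T -> T <> main_diag p ->
  2 * p <= 2 ^ #|off_diag p T|.
Proof.
move=> p_pr p_odd T_tr T_nd.
have /fin_all_exists [a a_mid] : forall j, exists i,
    j \in moved T -> i \in moved T /\ (i + col T i = 2 * j %[mod p]).
  move=> j; have [jm | _] := boolP (j \in moved T); last by exists j.
  by have [i ??] := moved_midpoint T_tr p_odd jm; exists i.
rewrite (card_off_diag T_tr); apply: (@midpoint_maps_bound _ _ a (col T \o a)) => //.
- by apply: contra_not_neq T_nd => /(moved_eq0 T_tr).
- by move=> j /a_mid [].
- by move=> j /a_mid [/(col_moved T_tr)].
- by move=> j /a_mid [am _]; move: (am); rewrite inE eq_sym.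
- by move=> j /a_mid [].
Qed.

Lemma log2_add1_le n k : 0 < n -> 2 * n <= 2 ^ k -> (ln (INR n) / ln 2 + 1 <= INR k)%R.
Proof.
move=> n_gt0 n_le.
have ln2_gt0 : (0 < ln 2)%R by rewrite -ln_1; apply: ln_increasing; lra.
have n_pos : (0 < INR n)%R by apply: lt_0_INR; apply/ltP.
have INR_exp2 m : INR (2 ^ m) = (2 ^ m)%R.
  by elim: m => // m IH; rewrite expnS mult_INR IH.
have le_pow : (2 * INR n <= 2 ^ k)%R.
  by rewrite -INR_exp2 -[2%R]/(INR 2) -mult_INR; apply/le_INR/leP.
have ln_le : (ln 2 + ln (INR n) <= INR k * ln 2)%R.
  rewrite -ln_mult -?ln_pow; try lra.
  by case/Rle_lt_or_eq_dec: le_pow => [/ln_increasing lt | ->]; lra.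
apply: (Rmult_le_reg_r (ln 2)) => //.
rewrite Rmult_plus_distr_r /Rdiv Rmult_assoc Rinv_l; lra.
Qed.

Theorem corollary6p2 (p : nat) (T : {set triple p}) :
  prime p -> odd p ->
  latin_transversal p (Bp p) T ->
  T <> main_diag p ->
  (ln (INR p) / ln 2 + 1 <= INR #|off_diag p T|)%R.
Proof.
move=> p_pr p_odd T_tr T_nd.
exact: log2_add1_le (prime_gt0 p_pr) (off_diag_card_bound p_pr p_odd T_tr T_nd).
Qed.
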